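(* Let $V$ be a finite set and $\{\eta(t),t\ge0\}$ a consistent configuration process on $\Omega$. Let $\mathbf x=(x_1,\dots,x_n)\in V_n$. Then for all $m\in\{1,\dots,n-1\}$, all $\xi\in\Omega_m$ and all $t\ge0$, $$\mathbb E_{\phi(\mathbf x)}[F(\xi,\eta(t))]=\sum_{1\le i_1<\dots<i_m\le n}\mathbb P_{\phi(x_{i_1},\dots,x_{i_m})}\big(\eta(t)=\xi\big).$$
   Context: $\Lambda\subseteq\mathbb N_0$; $\Omega_n=\{\eta\in\Lambda^V:\sum_x\eta_x=n\}$, $\Omega=\bigcup_n\Omega_n$; for $\mathbf y\in V^k$, $\phi(\mathbf y)=\sum_i\delta_{y_i}$; $V_n=\{\mathbf x\in V^n:\phi(\mathbf x)\in\Omega_n\}$. $F(\xi,\eta):=\prod_{j\in V}\binom{\eta_j}{\xi_j}$. A configuration process is a particle-number-conserving Markov process on $\Omega$ with generator $\mathcal L$; $\mathbb P_\eta,\mathbb E_\eta$ denote its law and expectation started from $\eta$. It is consistent if $[\mathcal L,\mathcal A]=0$, where $\mathcal Af(\eta)=\sum_{x\in V}\eta_xf(\eta-\delta_x)$ (terms with $\eta_x=0$ vanish). *)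

From HB Require Import structures.
From mathcomp Require Import all_boot all_order all_algebra.
From mathcomp Require Import all_classical all_reals all_analysis.
Set Implicit Arguments. Unset Strict Implicit. Unset Printing Implicit Defensive.
Import Order.TTheory GRing.Theory Num.Theory.
Local Open Scope ring_scope.

Definition config (V : finType) := {ffun V -> nat}.

Definition npart {V : finType} (eta : config V) : nat := (\sum_(x : V) eta x)%N.

Definition inOmega {V : finType} (Lam : pred nat) (eta : config V) : bool :=
  [forall x, Lam (eta x)].

Definition of_ord {V : finType} (k : nat) (g : {ffun V -> 'I_k.+1}) : config V :=
  [ffun x => nat_of_ord (g x)].

(* duplicate-free enumeration of the finite set Omega_k *)
Definition Omega_n {V : finType} (Lam : pred nat) (k : nat) : seq (config V) :=
  [seq of_ord g | g <- enum {ffun V -> 'I_k.+1}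
     & (npart (of_ord g) == k) && inOmega Lam (of_ord g)].

Definition subd {V : finType} (eta : config V) (x : V) : config V :=
  [ffun y => if y == x then (eta y).-1 else eta y].

(* Lambda is downward closed (needed for A to act on functions on Omega) *)
Definition downward_closed (Lam : pred nat) : Prop :=
  forall k l, (l <= k)%N -> Lam k -> Lam l.

Definition genL {R : realType} {V : finType} (Lam : pred nat)
  (c : config V -> config V -> R) (f : config V -> R) (eta : config V) : R :=
  \sum_(zeta <- Omega_n Lam (npart eta) | zeta != eta) c eta zeta * (f zeta - f eta).

Definition annih {R : realType} {V : finType} (f : config V -> R) (eta : config V) : R :=
  \sum_(x : V) (eta x)%:R * f (subd eta x).

Definition is_rates {R : realType} {V : finType} (c : config V -> config V -> R) : Prop :=
  forall eta zeta, eta != zeta -> 0 <= c eta zeta.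

Definition consistent {R : realType} {V : finType} (Lam : pred nat)
  (c : config V -> config V -> R) : Prop :=
  forall (f : config V -> R) (eta : config V), inOmega Lam eta ->
    genL Lam c (annih f) eta = annih (genL Lam c f) eta.

(* P t eta zeta = P_eta(eta(t) = zeta): the transition function of the chain,
   characterised by P_0 = Id and Kolmogorov's backward equation d/dt P_t = L P_t
   (unique solution = e^{tL} on each finite sector Omega_k). *)
Definition transition {R : realType} {V : finType} (Lam : pred nat)
  (c : config V -> config V -> R) (P : R -> config V -> config V -> R) : Prop :=
  (forall eta zeta, inOmega Lam eta -> P 0 eta zeta = (eta == zeta)%:R) /\
  (forall eta zeta (t : R), inOmega Lam eta ->
     is_derive t 1 (fun s => P s eta zeta)
       (genL Lam c (fun omega => P t omega zeta) eta)).

(* E_eta[ g(eta(t)) ]  (the process stays in Omega_{|eta|}) *)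
Definition Expect {R : realType} {V : finType} (Lam : pred nat)
  (P : R -> config V -> config V -> R) (t : R) (eta : config V) (g : config V -> R) : R :=
  \sum_(zeta <- Omega_n Lam (npart eta)) P t eta zeta * g zeta.

Definition Fdual {V : finType} (xi eta : config V) : nat :=
  (\prod_(j : V) 'C(eta j, xi j))%N.

Definition phi {V : finType} {n : nat} (x : 'I_n -> V) (I : {set 'I_n}) : config V :=
  [ffun v => #|[set i in I | x i == v]|].

From HB Require Import structures.
From mathcomp Require Import all_boot all_order all_algebra.
From mathcomp Require Import all_classical all_reals all_analysis.
From mathcomp Require Import ring lra zify.
Import Order.TTheory GRing.Theory Num.Theory.
Local Open Scope ring_scope.
Set Implicit Arguments. Unset Strict Implicit. Unset Printing Implicit Defensive.

(* Consistency says that the generator L commutes with the annihilation operator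
   A, hence with every power A^k.  On configurations with k more particles than
   xi, A^k 1_xi = k! F(xi, .).  So k! E_eta[F(xi, eta(t))] and A^k P_t(., xi)(eta)
   both solve the backward equation on the finite sector Omega_(|xi| + k) with the
   same initial value, and an energy estimate with Gronwall's inequality shows that
   they coincide for t >= 0.  Finally, A^k evaluated at phi(x) removes k of the n
   particles in all k! orders, which gives k! sum_(|I| = m) P_t(phi(x_I), xi). *)

Section Sectors.
Variables (V : finType) (Lam : pred nat).

Lemma of_ord_inj k : injective (@of_ord V k).
Proof.
move=> g h /ffunP e; apply/ffunP => v; apply: val_inj.
by have := e v; rewrite !ffunE.
Qed.

Lemma mem_Omega_n k (eta : config V) :
  (eta \in Omega_n Lam k) = (npart eta == k) && inOmega Lam eta.
Proof.
apply/idP/idP.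
  by case/mapP => g; rewrite mem_filter => /andP [h _] ->.
case/andP => /eqP eta_k etaO.
have eta_lt v : (eta v < k.+1)%N.
  by rewrite ltnS -eta_k /npart (bigD1 v) //= leq_addr.
have eta_of_ord : of_ord [ffun v => Ordinal (eta_lt v)] = eta.
  by apply/ffunP => v; rewrite !ffunE.
apply/mapP; exists [ffun v => Ordinal (eta_lt v)] => //.
by rewrite mem_filter mem_enum andbT eta_of_ord eta_k eqxx etaO.
Qed.

Lemma uniq_Omega_n k : uniq (Omega_n Lam k : seq (config V)).
Proof.
rewrite /Omega_n map_inj_uniq; first by rewrite filter_uniq // enum_uniq.
exact: of_ord_inj.
Qed.

Lemma Omega_n_npart k (eta : config V) :
  eta \in Omega_n Lam k -> Omega_n Lam (npart eta) = Omega_n Lam k :> seq (config V).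
Proof. by rewrite mem_Omega_n => /andP [/eqP ->]. Qed.

Lemma inOmega_subd (eta : config V) x :
  downward_closed Lam -> inOmega Lam eta -> inOmega Lam (subd eta x).
Proof.
move=> dc /forallP h; apply/forallP => y; rewrite ffunE.
case: (y == x); last exact: h.
exact: dc (leq_pred _) (h y).
Qed.

End Sectors.

Section DualityFunction.
Variable V : finType.
Implicit Types (xi eta : config V) (x : V).

Lemma subd_neq eta x y : y != x -> subd eta x y = eta y.
Proof. by move=> ne; rewrite ffunE (negbTE ne). Qed.

Lemma subd_self eta x : subd eta x x = (eta x).-1.
Proof. by rewrite ffunE eqxx. Qed.

Lemma npart_subd eta x : (0 < eta x)%N -> npart (subd eta x) = (npart eta).-1.
Proof.
move=> pos; rewrite /npart (bigD1 x) // [in RHS](bigD1 x) //= subd_self.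
rewrite (eq_bigr eta) => [|y ne]; last exact: subd_neq.
by rewrite -subn1 addnBAC ?subn1.
Qed.

Lemma Fdual_subd xi eta x :
  (eta x * Fdual xi (subd eta x) = (eta x - xi x) * Fdual xi eta)%N.
Proof.
rewrite /Fdual (bigD1 x) // [in RHS](bigD1 x) //= subd_self !mulnA mul_bin_down.
by congr (_ * _)%N; apply: eq_bigr => y ne; rewrite subd_neq.
Qed.

Lemma Fdual_neq0_le xi eta : Fdual xi eta != 0%N -> forall y, (xi y <= eta y)%N.
Proof.
move=> nz y; rewrite leqNgt; apply: contra nz => lt.
by rewrite /Fdual (bigD1 y) //= bin_small.
Qed.

Lemma npartB xi eta : (forall y, xi y <= eta y)%N ->
  (\sum_y (eta y - xi y) = npart eta - npart xi)%N.
Proof.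
move=> le; rewrite /npart.
by rewrite -[in RHS](eq_bigr _ (fun y _ => subnK (le y))) big_split addnK.
Qed.

Lemma sum_Fdual_subd xi eta :
  (\sum_x eta x * Fdual xi (subd eta x) = (npart eta - npart xi) * Fdual xi eta)%N.
Proof.
rewrite (eq_bigr _ (fun x _ => Fdual_subd xi eta x)) -big_distrl /=.
have [->|nz] := eqVneq (Fdual xi eta) 0%N; first by rewrite !muln0.
by rewrite npartB //; exact: Fdual_neq0_le.
Qed.

Lemma Fdual_npart_eq xi eta : npart eta = npart xi -> Fdual xi eta = (eta == xi).
Proof.
move=> e; have [->|ne] := eqVneq eta xi.
  by rewrite /Fdual big1 // => y _; rewrite binn.
apply/eqP; apply: contraNT ne => nz.
have le := Fdual_neq0_le nz.
move: (npartB le); rewrite e subnn => /eqP; rewrite sum_nat_eq0 => /forallP eq0.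
apply/eqP/ffunP => y; apply/eqP; rewrite eqn_leq le andbT -subn_eq0; exact: eq0.
Qed.

Lemma iter_annih_indicator (R : realType) xi k eta :
  npart eta = (npart xi + k)%N ->
  iter k (@annih R V) (fun zeta => (zeta == xi)%:R) eta = k`!%:R * (Fdual xi eta)%:R.
Proof.
elim: k eta => [|k IH] eta he; first by rewrite /= mul1r Fdual_npart_eq // he addn0.
rewrite iterS /annih.
rewrite (eq_bigr (fun x => k`!%:R * (eta x * Fdual xi (subd eta x))%N%:R)) => [|x _].
  by rewrite -mulr_sumr -natr_sum sum_Fdual_subd he addKn -!natrM factS mulnCA mulnA.
have [->|pos] := posnP (eta x); first by rewrite !mul0r mul0n mulr0.
by rewrite IH ?npart_subd ?he ?addnS // -!natrM mulnCA.
Qed.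

End DualityFunction.

Section Subsystems.
Variables (V : finType) (n : nat) (x : 'I_n -> V).
Implicit Types (I J : {set 'I_n}).

Lemma npart_phi I : npart (phi x I) = #|I|.
Proof.
rewrite /npart (eq_bigr (fun v => \sum_(i in I | x i == v) 1)%N) => [|v _].
  by rewrite -(partition_big x predT) //= sum1_card.
by rewrite ffunE sum1_card; apply: eq_card => i; rewrite !inE.
Qed.

Lemma phi_setD1 J j : j \in J -> phi x (J :\ j) = subd (phi x J) (x j).
Proof.
move=> jJ; apply/ffunP => v; rewrite !ffunE.
have [->|ne] := eqVneq v (x j).
  have jJv : j \in [set i in J | x i == x j] by rewrite inE jJ eqxx.
  rewrite (cardsD1 j [set i in J | x i == x j]) jJv add1n /=.
  by apply: eq_card => i; rewrite !inE andbA.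
apply: eq_card => i; rewrite !inE; have [->|] //= := eqVneq i j.
by rewrite eq_sym (negbTE ne) andbF.
Qed.

Lemma annih_phi (R : realType) (h : config V -> R) J :
  annih h (phi x J) = \sum_(j in J) h (phi x (J :\ j)).
Proof.
rewrite /annih (partition_big x predT) //=; apply: eq_bigr => v _.
rewrite (eq_bigr (fun _ => h (subd (phi x J) v))) => [|j /andP [jJ /eqP <-]].
  rewrite (eq_bigl (fun j => j \in [set i in J | x i == v])) => [|j]; last by rewrite inE.
  by rewrite sumr_const ffunE mulr_natl.
by rewrite phi_setD1.
Qed.

Lemma iter_annih_phi (R : realType) k (g : config V -> R) J : (k <= #|J|)%N ->
  iter k (@annih R V) g (phi x J) =
  k`!%:R * \sum_(I : {set 'I_n} | (I \subset J) && (#|I| == #|J| - k)%N) g (phi x I).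
Proof.
elim: k J => [|k IH] J le_kJ.
  rewrite /= mul1r (big_pred1 J) // => I /=.
  rewrite eqEcard subn0; case: (boolP (I \subset J)) => //= IJ.
  by rewrite eqn_leq subset_leq_card.
have card_D1 j : j \in J -> #|J :\ j| = #|J|.-1 by move=> jJ; rewrite (cardsD1 j J) jJ.
rewrite iterS annih_phi (eq_bigr (fun j => k`!%:R *
    \sum_(I : {set 'I_n} | (I \subset J :\ j) && (#|I| == #|J| - k.+1)%N) g (phi x I))); last first.
  move=> j jJ; rewrite IH card_D1 //; last by lia.
  by congr (_ * _); apply: eq_bigl => I; rewrite subnS predn_sub.
rewrite -mulr_sumr (exchange_big_dep
    (fun I : {set 'I_n} => (I \subset J) && (#|I| == #|J| - k.+1)%N)) /=;
  last by move=> j I jJ /andP [+ ->]; rewrite subsetD1 andbT => /andP [].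
rewrite factS natrM -mulrA mulrCA; congr (_ * _); rewrite mulr_sumr.
apply: eq_bigr => I /andP [IJ /eqP cardI].
(* each [I] is reached from the [#|J :\: I| = k.+1] sets [J :\ j] with [j] outside [I] *)
rewrite (eq_bigl (mem (J :\: I))) => [|j]; last first.
  by rewrite subsetD1 IJ cardI eqxx !inE andbT andbC.
rewrite sumr_const mulr_natl cardsD (finset.setIidPr IJ) cardI subKn //; lia.
Qed.

End Subsystems.

Lemma is_derive_big_seq (K : numFieldType) (U W : normedModType K) (T : eqType)
    (r : seq T) (h : T -> U -> W) (dh : T -> W) (u v : U) :
  (forall i, i \in r -> is_derive u v (h i) (dh i)) ->
  is_derive u v (fun y => \sum_(i <- r) h i y) (\sum_(i <- r) dh i).
Proof.
elim: r => [|a r IH] dhr.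
  rewrite big_nil (_ : (fun y => _) = cst 0); first exact: is_derive_cst.
  by apply: funext => y; rewrite big_nil.
rewrite big_cons (_ : (fun y => _) = h a + (fun y => \sum_(i <- r) h i y)).
  apply: is_deriveD; first by apply: dhr; rewrite mem_head.
  by apply: IH => i ir; apply: dhr; rewrite in_cons ir orbT.
by apply: funext => y; rewrite big_cons.
Qed.

Section Generator.
Variables (R : realType) (V : finType) (Lam : pred nat) (c : config V -> config V -> R).
Hypothesis dc : downward_closed Lam.

Lemma iter_annih_eq_Omega (f g : config V -> R) :
  (forall eta, inOmega Lam eta -> f eta = g eta) ->
  forall k eta, inOmega Lam eta -> iter k (@annih R V) f eta = iter k (@annih R V) g eta.
Proof.
move=> fg; elim=> [|k IH] eta etaO; first exact: fg.
by rewrite !iterS /annih; apply: eq_bigr => x _; rewrite IH // inOmega_subd.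
Qed.

Lemma genL_iter_annih : consistent Lam c ->
  forall k f eta, inOmega Lam eta ->
  genL Lam c (iter k (@annih R V) f) eta = iter k (@annih R V) (genL Lam c f) eta.
Proof.
move=> cons; elim=> [|k IH] f eta etaO //.
rewrite iterS cons // iterS /annih; apply: eq_bigr => x _.
by rewrite IH // inOmega_subd.
Qed.

Lemma is_derive_iter_annih (g : R -> config V -> R) (dg : config V -> R) (t : R) :
  (forall eta, inOmega Lam eta -> is_derive t 1 (fun s => g s eta) (dg eta)) ->
  forall k eta, inOmega Lam eta ->
  is_derive t 1 (fun s => iter k (@annih R V) (g s) eta) (iter k (@annih R V) dg eta).
Proof.
move=> dgO; elim=> [|k IH] eta etaO; first exact: dgO.
apply: is_derive_big_seq => x _; apply: is_deriveZ.
by apply: IH; rewrite inOmega_subd.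
Qed.

Lemma genL_sum (T : Type) (r : seq T) (a : T -> R) (f : T -> config V -> R) eta :
  genL Lam c (fun zeta => \sum_(i <- r) a i * f i zeta) eta =
  \sum_(i <- r) a i * genL Lam c (f i) eta.
Proof.
rewrite /genL (eq_bigr (fun zeta => \sum_(i <- r) a i * (c eta zeta * (f i zeta - f i eta)))).
  by rewrite exchange_big /=; apply: eq_bigr => i _; rewrite mulr_sumr.
by move=> zeta _; rewrite -sumrB mulr_sumr; apply: eq_bigr => i _; ring.
Qed.

Lemma genL_scaleB (a : R) (f g : config V -> R) eta :
  genL Lam c (fun zeta => a * f zeta - g zeta) eta =
  a * genL Lam c f eta - genL Lam c g eta.
Proof. by rewrite /genL mulr_sumr -sumrB; apply: eq_bigr => zeta _; ring. Qed.

End Generator.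

Lemma gronwall_eq0 (R : realType) (E dE : R -> R) (K : R) :
  (forall t : R, is_derive t 1 E (dE t)) -> (forall t, dE t <= K * E t) ->
  (forall t, 0 <= E t) -> E 0 = 0 ->
  forall t, 0 <= t -> E t = 0.
Proof.
move=> E_deriv dE_le E_ge0 E0 t t_ge0.
(* integrating factor: [(E w)' = w (dE - K E) <= 0] *)
pose w s : R := expR (- (K * s)).
have w_deriv (s : R) : is_derive s 1 w (w s * - K).
  apply: is_derive1_comp; apply: is_deriveN.
  by rewrite -[K in is_derive _ _ _ K]mulr1; apply: is_deriveZ.
pose G s := E s * w s.
have G_deriv (s : R) : is_derive s 1 G (E s * (w s * - K) + w s * dE s).
  exact: is_deriveM.
have G_derivable (s : R) : derivable G s 1 by case: (G_deriv s).
have [u _ Gt] := MVT_segment t_ge0 (fun s _ => G_deriv s)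
  (derivable_within_continuous (fun s _ => G_derivable s)).
have Gt_le0 : G t <= 0.
  have -> : G t = G t - G 0 by rewrite /G E0 mul0r subr0.
  rewrite Gt subr0 mulr_le0_ge0 //.
  have -> : E u * (w u * - K) + w u * dE u = w u * (dE u - K * E u) by ring.
  by rewrite mulr_ge0_le0 ?expR_ge0 // subr_le0.
apply/eqP; rewrite eq_le E_ge0 andbT.
by move: Gt_le0; rewrite /G pmulr_lle0 // expR_gt0.
Qed.

Lemma cross_term_le (R : realType) (a b c E : R) :
  a * a <= E -> b * b <= E -> 2 * (a * (c * (b - a))) <= 6 * `|c| * E.
Proof.
move=> aE bE; have abE : a * b <= E by nra.
have abE' : - E <= a * b by nra.
by case: (lerP 0 c) => c0; [rewrite ger0_norm | rewrite ltr0_norm]; nra.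
Qed.

Lemma backward_solution_eq0 (R : realType) (V : finType) (Lam : pred nat)
    (c : config V -> config V -> R) (k : nat) (d : R -> config V -> R) :
  (forall eta (t : R), eta \in Omega_n Lam k ->
     is_derive t 1 (fun s => d s eta) (genL Lam c (d t) eta)) ->
  (forall eta, eta \in Omega_n Lam k -> d 0 eta = 0) ->
  forall t, 0 <= t -> forall eta, eta \in Omega_n Lam k -> d t eta = 0.
Proof.
move=> d_deriv d0 t t_ge0.
(* the energy [E = \sum d^2] satisfies [E' <= K E] and [E 0 = 0] *)
set S := Omega_n Lam k.
pose E s := \sum_(eta <- S) d s eta * d s eta.
pose dE s := \sum_(eta <- S) 2 * (d s eta * genL Lam c (d s) eta).
pose K := \sum_(eta <- S) \sum_(zeta <- S | zeta != eta) 6 * `|c eta zeta|.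
have sq_le_E s eta : eta \in S -> d s eta * d s eta <= E s.
  move=> etaS; rewrite /E (bigD1_seq eta) ?uniq_Omega_n //= lerDl.
  by apply: sumr_ge0 => zeta _; rewrite -expr2 sqr_ge0.
have E_ge0 s : 0 <= E s by apply: sumr_ge0 => eta _; rewrite -expr2 sqr_ge0.
have E_deriv (s : R) : is_derive s 1 E (dE s).
  apply: is_derive_big_seq => eta etaS.
  apply: is_derive_eq (is_deriveM (d_deriv eta s etaS) (d_deriv eta s etaS)) _.
  by rewrite /GRing.scale /=; ring.
have dE_le s : dE s <= K * E s.
  rewrite /dE /K mulr_suml big_seq [leRHS]big_seq; apply: ler_sum => eta etaS.
  rewrite /genL (Omega_n_npart etaS) mulr_sumr mulr_suml mulr_sumr.
  rewrite big_seq_cond [leRHS]big_seq_cond; apply: ler_sum => zeta /andP [zetaS _].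
  by apply: cross_term_le; apply: sq_le_E.
have E0 : E 0 = 0 by rewrite /E big_seq big1 // => eta etaS; rewrite d0 // mul0r.
move=> eta etaS; apply/eqP; rewrite -[_ == 0]orbb -mulf_eq0; apply/eqP/le_anti.
rewrite -[X in _ <= X](gronwall_eq0 E_deriv dE_le E_ge0 E0 t_ge0) sq_le_E //=.
by rewrite -expr2 sqr_ge0.
Qed.

Section Duality.
Variables (R : realType) (V : finType) (Lam : pred nat).
Variables (c : config V -> config V -> R) (P : R -> config V -> config V -> R).
Hypotheses (dc : downward_closed Lam) (cons : consistent Lam c).
Hypothesis trP : transition Lam c P.
Variables (xi : config V) (k : nat).

Let S := Omega_n Lam (npart xi + k) : seq (config V).
Let expectF s eta := \sum_(zeta <- S) (Fdual xi zeta)%:R * P s eta zeta.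
Let annihP s eta := iter k (@annih R V) (fun zeta => P s zeta xi) eta.
Let defect s eta := k`!%:R * expectF s eta - annihP s eta.

Let is_derive_defect eta (s : R) : eta \in S ->
  is_derive s 1 (fun r => defect r eta) (genL Lam c (defect s) eta).
Proof.
rewrite mem_Omega_n => /andP [_ etaO].
have expectF_deriv : is_derive s 1 (fun r => expectF r eta)
    (\sum_(zeta <- S) (Fdual xi zeta)%:R * genL Lam c (fun o => P s o zeta) eta).
  apply: is_derive_big_seq => zeta _; apply: is_deriveZ; exact: trP.2.
have annihP_deriv : is_derive s 1 (fun r => annihP r eta)
    (iter k (@annih R V) (genL Lam c (fun o => P s o xi)) eta).
  by apply: (is_derive_iter_annih dc) etaO => omega omegaO; exact: trP.2.
apply: is_derive_eq (is_deriveB (is_deriveZ k`!%:R expectF_deriv) annihP_deriv) _.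
by rewrite /defect genL_scaleB /expectF genL_sum /annihP genL_iter_annih.
Qed.

Let defect0 eta : eta \in S -> defect 0 eta = 0.
Proof.
rewrite mem_Omega_n => /andP [/eqP eta_n etaO].
rewrite /defect /annihP (iter_annih_eq_Omega dc (g := fun zeta => (zeta == xi)%:R) _ k etaO);
  last by move=> zeta zetaO; exact: trP.1.
rewrite iter_annih_indicator // /expectF (bigD1_seq eta) ?uniq_Omega_n //=;
  last by rewrite mem_Omega_n eta_n eqxx.
rewrite trP.1 // eqxx mulr1 big1 ?addr0 ?subrr // => zeta ne.
by rewrite trP.1 // eq_sym (negbTE ne) mulr0.
Qed.

Lemma iter_annih_transition (t : R) eta : 0 <= t ->
  npart eta = (npart xi + k)%N -> inOmega Lam eta ->
  iter k (@annih R V) (fun zeta => P t zeta xi) eta =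
  k`!%:R * Expect Lam P t eta (fun zeta => (Fdual xi zeta)%:R).
Proof.
move=> t_ge0 eta_n etaO.
have etaS : eta \in S by rewrite mem_Omega_n eta_n eqxx.
have /eqP := backward_solution_eq0 is_derive_defect defect0 t_ge0 etaS.
rewrite subr_eq0 => /eqP; rewrite /annihP => <-; rewrite /Expect eta_n; congr (_ * _).
by apply: eq_bigr => zeta _; rewrite mulrC.
Qed.

End Duality.

Theorem theorem3p7 (R : realType) (V : finType) (Lam : pred nat)
  (c : config V -> config V -> R) (P : R -> config V -> config V -> R)
  (n : nat) (x : 'I_n -> V) :
  downward_closed Lam ->
  is_rates c ->
  consistent Lam c ->
  transition Lam c P ->
  inOmega Lam (phi x [set: 'I_n]%SET) ->
  forall (m : nat) (xi : config V) (t : R),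
    (0 < m < n)%N -> inOmega Lam xi -> npart xi = m -> 0 <= t ->
    Expect Lam P t (phi x [set: 'I_n]%SET) (fun eta => (Fdual xi eta)%:R)
    = \sum_(I : {set 'I_n} | #|I| == m) P t (phi x I) xi.
Proof.
(* the rates need not be nonnegative: the energy estimate only uses [`|c|] *)
move=> dc _ cons trP phiO m xi t /andP [_ lt_mn] _ xi_m t_ge0.
have le_mn := ltnW lt_mn.
have phi_n : npart (phi x [set: 'I_n]) = (npart xi + (n - m))%N.
  by rewrite npart_phi cardsT card_ord xi_m subnKC.
have fact_neq0 : (n - m)`!%:R != 0 :> R by rewrite pnatr_eq0 -lt0n fact_gt0.
have := iter_annih_transition dc cons trP t_ge0 phi_n phiO.
rewrite iter_annih_phi cardsT card_ord ?leq_subr // => /(mulfI fact_neq0) <-.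
by apply: eq_bigl => I; rewrite finset.subsetT subKn.
Qed.
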